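(* Let $\mathcal{X}\subseteq\mathbb{R}^n$ be compact. Then $\mathcal{X}$ is standard comonotone if and only if its convex hull $\operatorname{conv}(\mathcal{X})$ is standard comonotone.
   Context: $\Pi_n$ is the set of permutations of $[n]$; for $\pi\in\Pi_n$, $\mathcal{Z}(\pi)=\{x\in\mathbb{R}^n: x_{\pi(1)}\ge\cdots\ge x_{\pi(n)}\}$. A set $\mathcal{X}\subseteq\mathbb{R}^n$ is standard comonotone if for every $\pi\in\Pi_n$ and every $v\in\mathcal{Z}(\pi)$, whenever $\max_{x\in\mathcal{X}}v^\top x$ attains its optimum, it has an optimal solution in $\mathcal{Z}(\pi)$. *)

(* R^n is 'rV[R]_n for R : realType,
   with the product (matrix) topology of mathcomp-analysis. *)
From HB Require Import structures.
From mathcomp Require Import all_boot all_order all_algebra all_fingroup.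
From mathcomp Require Import all_classical all_reals all_analysis.
Set Implicit Arguments. Unset Strict Implicit. Unset Printing Implicit Defensive.
Import Order.TTheory GRing.Theory Num.Theory.
Import numFieldNormedType.Exports.
Local Open Scope classical_set_scope.
Local Open Scope ring_scope.

Definition dotv (R : realType) (n : nat) (v x : 'rV[R]_n) : R :=
  \sum_(i < n) v ord0 i * x ord0 i.

(* Z(pi) = { x : x_{pi(1)} >= ... >= x_{pi(n)} } (0-based indices) *)
Definition Zcone (R : realType) (n : nat) (pi : 'S_n) : set 'rV[R]_n :=
  [set x | forall i j : 'I_n, (i <= j)%N -> x ord0 (pi j) <= x ord0 (pi i)].

Definition is_argmax (R : realType) (n : nat) (X : set 'rV[R]_n) (v x0 : 'rV[R]_n) :=
  X x0 /\ forall x, X x -> dotv v x <= dotv v x0.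

Definition standard_comonotone (R : realType) (n : nat) (X : set 'rV[R]_n) :=
  forall (pi : 'S_n) (v : 'rV[R]_n), Zcone pi v ->
    (exists x0, is_argmax X v x0) ->
    exists2 x0, is_argmax X v x0 & Zcone pi x0.

Definition conv_hull (R : realType) (n : nat) (X : set 'rV[R]_n) : set 'rV[R]_n :=
  [set x | exists (k : nat) (p : 'I_k -> 'rV[R]_n) (w : 'I_k -> R),
     [/\ forall i, X (p i), forall i, 0 <= w i, \sum_(i < k) w i = 1
       & x = \sum_(i < k) w i *: p i]].

From HB Require Import structures.
From mathcomp Require Import all_boot all_order all_algebra all_fingroup.
From mathcomp Require Import all_classical all_reals all_analysis.
From mathcomp Require Import ring lra.
Set Implicit Arguments. Unset Strict Implicit. Unset Printing Implicit Defensive.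
Import Order.TTheory GRing.Theory Num.Theory.
Import numFieldNormedType.Exports.
Local Open Scope classical_set_scope.
Local Open Scope ring_scope.

(** Maximising a linear function over conv X gives the same value as over X,
and an optimum of X is an optimum of conv X; this yields one direction.
Conversely, let x0 maximise v in Zcone pi over the compact set X. For t >= 0
let q be a point of X farthest from a := -(s u + t v), where u is a strictly
decreasing "staircase" along pi and s bounds the coordinate spread of X. Then
d := q - a = (q + s u) + t v lies in Zcone pi and exposes q: every x in X
satisfies |x - q|^2 <= 2 d.(q - x), so q is the unique maximiser of d over
conv X, and comonotonicity of conv X forces q into Zcone pi. Comparing d.q
with d.x0 gives t (v.x0 - v.q) <= C for a constant C independent of t, so the
maximum of v over the compact set X ∩ Zcone pi is at least v.x0. *)

Lemma le0_of_mul_ubound (R : realFieldType) (g C : R) :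
  (forall t, 0 <= t -> t * g <= C) -> g <= 0.
Proof.
move=> ub; rewrite leNgt; apply/negP => g0.
have t0 : 0 <= (`|C| + 1) / g by rewrite divr_ge0 // ltW.
have := ub _ t0; rewrite mulfVK ?gt_eqF //.
have := ler_norm C; lra.
Qed.

Section dotv.
Variables (R : realType) (n : nat).
Implicit Types (x y v w : 'rV[R]_n).

Lemma dotvDl v w x : dotv (v + w) x = dotv v x + dotv w x.
Proof.
by rewrite /dotv -big_split; apply: eq_bigr => j _; rewrite mxE mulrDl.
Qed.

Lemma dotvZl (t : R) v x : dotv (t *: v) x = t * dotv v x.
Proof.
by rewrite /dotv mulr_sumr; apply: eq_bigr => j _; rewrite mxE mulrA.
Qed.

Lemma dotvBr v x y : dotv v (x - y) = dotv v x - dotv v y.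
Proof. by rewrite /dotv -sumrB; apply: eq_bigr => j _; rewrite !mxE mulrBr. Qed.

Lemma dotv_sumZr k (w : 'I_k -> R) (p : 'I_k -> 'rV[R]_n) v :
  dotv v (\sum_(i < k) w i *: p i) = \sum_(i < k) w i * dotv v (p i).
Proof.
rewrite /dotv; under eq_bigr => j _ do rewrite summxE mulr_sumr.
rewrite exchange_big /=; apply: eq_bigr => i _; rewrite mulr_sumr.
by apply: eq_bigr => j _; rewrite mxE mulrCA.
Qed.

Lemma dotv_ge0 x : 0 <= dotv x x.
Proof. by apply: sumr_ge0 => i _; rewrite -expr2 sqr_ge0. Qed.

Lemma dotv_eq0 x : dotv x x = 0 -> x = 0.
Proof.
move=> /eqP; rewrite psumr_eq0; last by move=> i _; rewrite -expr2 sqr_ge0.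
move=> /allP x0; apply/matrixP => i j; rewrite ord1 mxE.
by have := x0 j (mem_index_enum _); rewrite -expr2 sqrf_eq0 => /eqP.
Qed.

Lemma dotv_subr_expand x q a :
  dotv (x - a) (x - a) =
  dotv (q - a) (q - a) - 2 * (dotv (q - a) q - dotv (q - a) x)
    + dotv (x - q) (x - q).
Proof.
rewrite /dotv -sumrB mulr_sumr -sumrB -big_split /=.
by apply: eq_bigr => j _; rewrite !mxE; ring.
Qed.

Lemma continuous_dotv (T : topologicalType) (f g : T -> 'rV[R]_n) :
  continuous f -> continuous g -> continuous (fun z => dotv (f z) (g z)).
Proof.
move=> fc gc; rewrite /dotv.
apply: (@continuous_big R _ +%R 0 xpredT add_continuous) => j _ z.
have coord (h : T -> 'rV[R]_n) :
    continuous h -> {for z, continuous (fun z => h z ord0 j)}.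
  move=> hc.
  exact: (continuous_comp (hc z) (@coord_continuous R 1 n ord0 j (h z))).
have := continuousM (coord f fc) (coord g gc); exact.
Qed.

End dotv.

Section Zcone.
Variables (R : realType) (n : nat) (pi : 'S_n).

Lemma closed_Zcone : closed (@Zcone R n pi).
Proof.
have -> : @Zcone R n pi =
    \bigcap_(ij in [set ij : 'I_n * 'I_n | (ij.1 <= ij.2)%N])
      ((fun x => x ord0 (pi ij.2) - x ord0 (pi ij.1)) @^-1` [set r | r <= 0]).
  apply/seteqP; split => x /=.
    by move=> Zx [i j] /= ij; rewrite subr_le0; apply: Zx.
  by move=> Zx i j ij; have := Zx (i, j) ij; rewrite /= subr_le0.
apply: closed_bigI => ij _.
apply: preimage_closed; last exact: closed_le.
move=> x _; exact: (cvgB (@coord_continuous R 1 n ord0 (pi ij.2) x)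
                          (@coord_continuous R 1 n ord0 (pi ij.1) x)).
Qed.

Lemma ZconeD x y : Zcone pi x -> Zcone pi y -> @Zcone R n pi (x + y).
Proof. by move=> Zx Zy i j ij; rewrite !mxE lerD ?Zx ?Zy. Qed.

Lemma ZconeZ (t : R) x : 0 <= t -> Zcone pi x -> Zcone pi (t *: x).
Proof. by move=> t0 Zx i j ij; rewrite !mxE ler_wpM2l ?Zx. Qed.

Definition stair : 'rV[R]_n := \row_k - ((pi^-1)%g k)%:R.

Lemma Zcone_addZ_stair (q : 'rV[R]_n) (s : R) :
  (forall a b, q ord0 a - q ord0 b <= s) -> Zcone pi (q + s *: stair).
Proof.
move=> spread i j; rewrite leq_eqVlt => /orP [/eqP/val_inj -> // | ij].
rewrite !mxE !permK.
have s0 : 0 <= s by have := spread (pi i) (pi i); rewrite subrr.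
have ji : 0 <= j%:R - i%:R - 1 :> R.
  by rewrite subr_ge0 lerBrDr addrC natr1 ler_nat.
have := mulr_ge0 s0 ji; have := spread (pi j) (pi i); nra.
Qed.

End Zcone.

Section conv_hull.
Variables (R : realType) (n : nat) (X : set 'rV[R]_n).
Implicit Types (x y v d q : 'rV[R]_n).

Lemma sub_conv_hull : X `<=` conv_hull X.
Proof.
move=> x Xx; exists 1%N, (fun=> x), (fun=> 1); split => //.
  by rewrite big_ord1.
by rewrite big_ord1 scale1r.
Qed.

Lemma conv_hull_dotv_le v c y :
  (forall x, X x -> dotv v x <= c) -> conv_hull X y -> dotv v y <= c.
Proof.
move=> ub [k [p [w [Xp w0 w1 ->]]]]; rewrite dotv_sumZr.
apply: (@le_trans _ _ (\sum_(i < k) w i * c)).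
  by apply: ler_sum => i _; apply: ler_wpM2l => //; apply: ub.
by rewrite -mulr_suml w1 mul1r.
Qed.

Lemma conv_hull_dotv_ge v y :
  conv_hull X y -> exists2 x, X x & dotv v y <= dotv v x.
Proof.
move=> [[|k] [p [w [Xp w0 w1 ->]]]].
  by move: w1; rewrite big_ord0 => /eqP; rewrite eq_sym oner_eq0.
have [i0 _ i0max] :=
  Order.TotalTheory.arg_maxP (fun i => dotv v (p i)) (isT : xpredT ord0).
exists (p i0) => //; rewrite dotv_sumZr.
apply: (@le_trans _ _ (\sum_(i < k.+1) w i * dotv v (p i0))).
  by apply: ler_sum => i _; apply: ler_wpM2l => //; apply: i0max.
by rewrite -mulr_suml w1 mul1r.
Qed.

Lemma standard_comonotone_conv_hull :
  standard_comonotone X -> standard_comonotone (conv_hull X).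
Proof.
move=> SC pi v Zv [y0 [Cy0 y0max]].
have [x Xx y0x] := conv_hull_dotv_ge v Cy0.
have [|x1 [Xx1 x1max] Zx1] := SC pi v Zv.
  exists x; split => // x' Xx'.
  by apply: le_trans y0x; apply/y0max/sub_conv_hull.
exists x1 => //; split; first exact: sub_conv_hull.
by move=> y; apply: conv_hull_dotv_le.
Qed.

Lemma conv_hull_exposed_eq d q y :
  (forall x, X x -> dotv (x - q) (x - q) <= 2 * (dotv d q - dotv d x)) ->
  conv_hull X y -> dotv d q <= dotv d y -> y = q.
Proof.
move=> exposed [k [p [w [Xp w0 w1 yE]]]] dqy.
have dp i : 0 <= dotv d q - dotv d (p i).
  by have := exposed _ (Xp i); have := dotv_ge0 (p i - q); lra.
pose e i := w i * (dotv d q - dotv d (p i)).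
have e_sum : \sum_(i < k) e i = dotv d q - dotv d y.
  rewrite yE dotv_sumZr -[dotv d q]mul1r -w1 mulr_suml -sumrB.
  by apply: eq_bigr => i _; rewrite /e mulrBr.
have e0 i : e i = 0.
  have e_ge0 j : 0 <= e j := mulr_ge0 (w0 j) (dp j).
  have : \sum_(j < k) e j == 0.
    by rewrite eq_le {1}e_sum subr_le0 dqy; apply: sumr_ge0 => j _.
  by rewrite psumr_eq0 // => /allP/(_ i (mem_index_enum _))/eqP.
have wpq i : w i *: (p i - q) = 0.
  have le0 : w i * dotv (p i - q) (p i - q) <= 0.
    by rewrite -(mulr0 2) -(e0 i) /e mulrCA ler_wpM2l ?exposed.
  have : w i * dotv (p i - q) (p i - q) == 0.
    by rewrite eq_le le0 mulr_ge0 ?dotv_ge0.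
  rewrite mulf_eq0 => /orP [/eqP -> | /eqP/dotv_eq0 ->].
    by rewrite scale0r.
  by rewrite scaler0.
apply/eqP; rewrite -subr_eq0 yE -[q]scale1r -w1 scaler_suml -sumrB.
by apply/eqP/big1 => i _; rewrite -scalerBr.
Qed.

Lemma farthest_point_exposed a q :
  (forall x, X x -> dotv (x - a) (x - a) <= dotv (q - a) (q - a)) ->
  forall x, X x ->
    dotv (x - q) (x - q) <= 2 * (dotv (q - a) q - dotv (q - a) x).
Proof. by move=> far x /far; rewrite (dotv_subr_expand x q a); lra. Qed.

Lemma exposed_point_Zcone pi d q :
  standard_comonotone (conv_hull X) -> Zcone pi d -> X q ->
  (forall x, X x -> dotv (x - q) (x - q) <= 2 * (dotv d q - dotv d x)) ->
  Zcone pi q.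
Proof.
move=> SC Zd Xq exposed.
have dmax x : X x -> dotv d x <= dotv d q.
  by move=> /exposed; have := dotv_ge0 (x - q); lra.
have [|y [Cy ymax] Zy] := SC pi d Zd.
  exists q; split; first exact: sub_conv_hull.
  by move=> y; exact: conv_hull_dotv_le.
by rewrite -(conv_hull_exposed_eq exposed Cy (ymax q (sub_conv_hull Xq))).
Qed.

End conv_hull.

Lemma entry_le_mx_norm (K : realDomainType) m n (x : 'M[K]_(m, n)) i j :
  `|x i j| <= `|x|.
Proof. by rewrite [`|x|]mx_normrE; exact: (le_bigmax _ _ (i, j)). Qed.

Section compact.
Variables (R : realType) (n : nat) (X : set 'rV[R]_n).
Hypothesis cX : compact X.

Lemma compact_spread :
  exists s, forall x, X x -> forall a b, x ord0 a - x ord0 b <= s.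
Proof.
have [M [_ XM]] := compact_bounded cX.
exists (2 * (M + 1)) => x Xx a b.
have xM j : `|x ord0 j| <= M + 1.
  by apply: le_trans (entry_le_mx_norm x ord0 j) _; apply: XM Xx; rewrite ltrDl.
have := xM a; have := xM b; rewrite !ler_norml; lra.
Qed.

Lemma compact_argmax (f : 'rV[R]_n -> R) :
  X !=set0 -> continuous f -> exists2 m, X m & forall x, X x -> f x <= f m.
Proof.
move=> X0 fc.
have [m /set_mem Xm mmax] := EVT_max_rV X0 cX (continuous_subspaceT fc).
by exists m => // x Xx; apply/mmax/mem_set.
Qed.

End compact.

Section conv_hull_comonotone.
Variables (R : realType) (n : nat) (X : set 'rV[R]_n).
Hypotheses (cX : compact X) (SC : standard_comonotone (conv_hull X)).

Let continuous_addr (c : 'rV[R]_n) : continuous (fun x : 'rV[R]_n => x + c).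
Proof. by move=> x; exact: (cvgD cvg_id (cvg_cst c)). Qed.

Lemma Zcone_approx_argmax pi v x0 : Zcone pi v -> X x0 ->
  exists C, forall t, 0 <= t ->
    exists2 q, (X `&` Zcone pi) q & t * (dotv v x0 - dotv v q) <= C.
Proof.
move=> Zv Xx0; have X0 : X !=set0 by exists x0.
have [s spread] := compact_spread cX.
pose u := s *: stair R pi.
have [xC _ Cmax] := compact_argmax cX X0
  (continuous_dotv (@continuous_addr u) (@continuous_addr (- x0))).
exists (dotv (xC + u) (xC - x0)) => t t0.
pose a := - (u + t *: v).
have [q Xq far] := compact_argmax cX X0
  (continuous_dotv (@continuous_addr (- a)) (@continuous_addr (- a))).
have exposed := farthest_point_exposed far.
have dE : q - a = q + u + t *: v by rewrite opprK addrA.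
have Zq : Zcone pi q.
  apply: (exposed_point_Zcone SC _ Xq exposed).
  rewrite dE; apply: ZconeD; last exact: ZconeZ.
  exact: Zcone_addZ_stair (spread q Xq).
exists q => //.
have : dotv (q - a) x0 <= dotv (q - a) q.
  by have := exposed _ Xx0; have := dotv_ge0 (x0 - q); lra.
have := Cmax _ Xq; rewrite dE !dotvDl !dotvZl !dotvBr; lra.
Qed.

Lemma conv_hull_standard_comonotone : standard_comonotone X.
Proof.
move=> pi v Zv [x0 [Xx0 x0max]].
have [C approx] := Zcone_approx_argmax Zv Xx0.
have [q0 Kq0 _] := approx 0 (lexx 0).
have vc : continuous (fun x : 'rV[R]_n => dotv v x).
  apply: (@continuous_dotv _ _ _ (fun=> v) id); first exact: cst_continuous.
  by move=> x; exact: cvg_id.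
have [m [Xm Zm] mmax] :=
  compact_argmax (compact_closedI cX (@closed_Zcone R n pi))
    (ex_intro _ q0 Kq0) vc.
have : dotv v x0 - dotv v m <= 0.
  apply: (@le0_of_mul_ubound _ _ C) => t t0.
  have [q Kq tq] := approx t t0.
  by apply: le_trans tq; rewrite ler_wpM2l // lerB // mmax.
by exists m => //; split => // x /x0max; lra.
Qed.

End conv_hull_comonotone.

Theorem proposition2 (R : realType) (n : nat) (X : set 'rV[R]_n) :
  compact X ->
  (standard_comonotone X <-> standard_comonotone (conv_hull X)).
Proof.
move=> cX; split; first exact: standard_comonotone_conv_hull.
exact: conv_hull_standard_comonotone.
Qed.
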